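(* In an orbit-finite monoid, a sequence $x_1,\dots,x_n$ (with $n\ge 2$) is smooth if and only if for every $i<n$ the two-element sequence $x_i,x_{i+1}$ is smooth.
   Context: Atoms $\mathbb A$ are a countably infinite set acted on by its bijections (atom automorphisms). An orbit-finite monoid is a monoid whose underlying set is orbit-finite (every element finitely supported, and for some tuple $\bar a$ of atoms the set is a union of finitely many orbits of the group of automorphisms fixing $\bar a$ pointwise) and whose multiplication is finitely supported. A sequence $x_1,\dots,x_n$ of monoid elements is smooth if for every $i\in\{1,\dots,n\}$ there exist monoid elements $y,z$ with $y\,x_1\cdots x_n\,z=x_i$. *)

(* Atoms are modelled by nat; atom automorphisms are
   bijections nat -> nat. *)
From mathcomp Require Import all_boot.
Set Implicit Arguments. Unset Strict Implicit. Unset Printing Implicit Defensive.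

Definition fixes (pi : nat -> nat) (s : seq nat) : Prop :=
  forall a, a \in s -> pi a = a.

Record orbitFiniteMonoid := OrbitFiniteMonoid {
  carrier : Type;
  act : (nat -> nat) -> carrier -> carrier;
  mul : carrier -> carrier -> carrier;
  mone : carrier;
  act_id : forall x, act id x = x;
  act_comp : forall pi sigma x, bijective pi -> bijective sigma ->
     act (pi \o sigma) x = act pi (act sigma x);
  act_fin_supp : forall x, exists s : seq nat,
     forall pi, bijective pi -> fixes pi s -> act pi x = x;
  orbit_finite : exists (abar : seq nat) (k : nat) (rep : nat -> carrier),
     forall x, exists i, i < k /\
       exists pi, [/\ bijective pi, fixes pi abar & x = act pi (rep i)];
  mulA : forall x y z, mul x (mul y z) = mul (mul x y) z;
  mul1x : forall x, mul mone x = x;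
  mulx1 : forall x, mul x mone = x;
  mul_fin_supp : exists s : seq nat, forall pi, bijective pi -> fixes pi s ->
     forall x y, act pi (mul x y) = mul (act pi x) (act pi y)
}.

Definition mprod (M : orbitFiniteMonoid) (xs : seq (carrier M)) : carrier M :=
  foldr (@mul M) (@mone M) xs.

Definition smooth (M : orbitFiniteMonoid) (xs : seq (carrier M)) : Prop :=
  forall i, i < size xs ->
    exists y z, mul (mul y (mprod xs)) z = nth (@mone M) xs i.

From Pilot Require Import Defs.
From mathcomp Require Import all_boot zify.
From Stdlib Require Import FunctionalExtensionality ClassicalEpsilon.
Set Implicit Arguments. Unset Strict Implicit. Unset Printing Implicit Defensive.

(* The only place where orbit-finiteness enters is periodicity: every element
   g has an idempotent power.  Indeed all powers of g share one finite support
   S, and an orbit-finite set has only finitely many S-supported elements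
   (each is a representative moved by an automorphism whose values on a fixed
   finite set of atoms may be assumed bounded), so two powers coincide.
   Periodicity yields the classical stability property: if x is J-below c x,
   then x is already L-below c x (x = t c x).

   One direction holds because each adjacent pair is a
   factor of the sequence; for the other, an induction shows with stability
   that every prefix product is J-above each of its letters. *)

Definition swap_atoms (a b x : nat) : nat :=
  if x == a then b else if x == b then a else x.

Lemma swap_atomsK a b : involutive (swap_atoms a b).
Proof. by move=> x; rewrite /swap_atoms; do ! case: eqP => //=; congruence. Qed.

Definition atom_bound (S : seq nat) : nat := \max_(s <- S) s.+1.

Lemma atom_bound_gt s S : s \in S -> s < atom_bound S.
Proof. by move=> sS; apply: (@leq_bigmax_seq _ S xpredT succn s sS). Qed.

(* Any finite set P of atoms can be moved below atom_bound S + size P by an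
   automorphism fixing S: this bounds the "shapes" of S-fixing permutations. *)
Lemma compress (S P : seq nat) : exists tau, [/\ bijective tau, fixes tau S &
  forall p, p \in P -> tau p < atom_bound S + size P].
Proof.
elim: P => [|p P [tau [btau ftau Htau]]].
  by exists id; split => //; apply: inv_bij.
have Htau' q : q \in P -> tau q < atom_bound S + (size P).+1.
  by move=> /Htau; lia.
case: (ltnP (tau p) (atom_bound S + size P)) => hp.
  by exists tau; split => // q; rewrite /= in_cons => /predU1P [->|/Htau']; lia.
set b := atom_bound S + size P.
exists (swap_atoms (tau p) b \o tau); split.
- by apply: bij_comp => //; apply/inv_bij/swap_atomsK.
- move=> s sS /=; have := atom_bound_gt sS; rewrite (ftau s sS) /swap_atoms.
  by case: ifP => [/eqP|_]; [lia|case: ifP => [/eqP|_]; lia].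
- move=> q; rewrite /= in_cons /swap_atoms => /predU1P [->|/Htau qP].
    by rewrite eqxx; lia.
  by case: ifP => [/eqP|_]; [lia|case: ifP => [/eqP|_]; lia].
Qed.

Lemma pigeonhole_code (A : Type) (C : finType) (f : nat -> A)
    (code : nat -> C -> Prop) :
  (forall n, exists c, code n c) ->
  (forall n m c, code n c -> code m c -> f n = f m) ->
  exists n m, n < m /\ f n = f m.
Proof.
move=> has_code code_eq.
pose c n := proj1_sig (constructive_indefinite_description _ (has_code n)).
have cP n : code n (c n) := proj2_sig (constructive_indefinite_description _ _).
pose g (j : 'I_#|C|.+1) := c j.
have /injectivePn [j1 [j2 ne12 e12]] : ~~ injectiveb g.
  by apply/injectiveP => /leq_card; rewrite card_ord ltnn.
have e n m : c n = c m -> f n = f m.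
  by move=> enm; apply: (code_eq n m (c m)) => //; rewrite -enm.
case: (ltngtP j1 j2) => [lt12|lt21|/val_inj eq12]; last by rewrite eq12 eqxx in ne12.
- by exists j1, j2; split => //; apply: e.
- by exists j2, j1; split => //; apply: e.
Qed.

Section Support.
Variable M : orbitFiniteMonoid.

Definition supported (S : seq nat) (x : carrier M) : Prop :=
  forall pi, bijective pi -> fixes pi S -> act pi x = x.

Lemma supported_sub S S' x : {subset S <= S'} -> supported S x -> supported S' x.
Proof. by move=> sub Sx pi bpi fpi; apply: Sx => // a /sub; apply: fpi. Qed.

Lemma common_support (rep : nat -> carrier M) k :
  exists R, forall i, i < k -> supported R (rep i).
Proof.
elim: k => [|k [R HR]]; first by exists [::].
have [s Hs] := act_fin_supp (rep k).
exists (R ++ s) => i; rewrite ltnS leq_eqVlt => /predU1P [->|ik].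
  by apply: supported_sub Hs => a as_; rewrite mem_cat as_ orbT.
by apply: supported_sub (HR i ik) => a aR; rewrite mem_cat aR.
Qed.

Lemma act_supported_agree R x s1 s2 : supported R x ->
  bijective s1 -> bijective s2 -> {in R, s1 =1 s2} -> act s1 x = act s2 x.
Proof.
move=> Rx b1 b2 s12; case: (b2) => g2 g2K2 s2K2.
have -> : s1 = s2 \o (g2 \o s1) by apply: functional_extensionality => a /=; rewrite s2K2.
have bg : bijective (g2 \o s1) by apply: bij_comp => //; exists s2.
by rewrite act_comp // Rx // => a aR /=; rewrite s12 // g2K2.
Qed.

Lemma orbit_normal_form : exists k (rep : nat -> carrier M) R,
  (forall i, i < k -> supported R (rep i)) /\
  forall S x, supported S x -> exists i sigma, [/\ i < k, bijective sigma,
    {in R, forall a, sigma a < atom_bound S + size R} & x = act sigma (rep i)].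
Proof.
have [abar [k [rep Hrep]]] := orbit_finite M.
have [R HR] := common_support rep k.
exists k, rep, R; split => // S x Sx.
have [i [ik [pi [bpi _ xE]]]] := Hrep x.
have [tau [btau ftau Htau]] := compress S (map pi R).
exists i, (tau \o pi); split => //.
- exact: bij_comp.
- by move=> a aR /=; rewrite -(size_map pi R); apply/Htau/map_f.
- by rewrite act_comp // -xE Sx.
Qed.

(* Any sequence of elements sharing a finite support takes some value twice:
   by the normal form, such elements are determined by finitely many data. *)
Lemma supported_repeat S (f : nat -> carrier M) :
  (forall n, supported S (f n)) -> exists n m, n < m /\ f n = f m.
Proof.
move=> Sf; have [k [rep [R [HR nf]]]] := orbit_normal_form.
set B := atom_bound S + size R.
pose code n (c : 'I_k.+1 * {ffun 'I_(size R) -> 'I_B.+1}) :=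
  exists i sigma, [/\ i < k, bijective sigma, {in R, forall a, sigma a < B},
    f n = act sigma (rep i) & c = (inord i, [ffun j : 'I_(size R) => inord (sigma (nth 0 R j))])].
apply: (pigeonhole_code (code := code)).
  move=> n; have [i [sigma [ik bs sR fn]]] := nf S (f n) (Sf n).
  by exists (inord i, [ffun j : 'I_(size R) => inord (sigma (nth 0 R j))]), i, sigma.
move=> n m _ [i1 [s1 [ik1 b1 B1 -> ->]]] [i2 [s2 [ik2 b2 B2 -> [ei esigma]]]].
have ei' : i1 = i2.
  by move: ei => /(congr1 val); rewrite /= !inordK // ltnS ltnW.
rewrite ei'; apply: (act_supported_agree (HR _ ik2)) => // a aR.
have aidx : index a R < size R by rewrite index_mem.
move/ffunP: esigma => /(_ (Ordinal aidx)); rewrite !ffunE /= nth_index //.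
move=> /(congr1 val); rewrite /= !inordK // ltnS ltnW //; [exact: B2|exact: B1].
Qed.
End Support.

Section Powers.
Variables (T : Type) (op : T -> T -> T).
Hypothesis opA : associative op.

(* spow g n is the power g^(n+1) in the semigroup (T, op) *)
Fixpoint spow (g : T) (n : nat) : T :=
  if n is n'.+1 then op g (spow g n') else g.

Lemma spowSr g n : spow g n.+1 = op (spow g n) g.
Proof. by elim: n => [//|n IH]; rewrite [RHS]/= -opA -IH. Qed.

Lemma spowD g a b : op (spow g a) (spow g b) = spow g (a + b).+1.
Proof. by elim: a => [//|a IH]; rewrite /= -opA IH. Qed.

Lemma spow_periodic g n m : n <= m -> spow g n = spow g m ->
  forall q j, n <= j -> spow g (j + q * (m - n)) = spow g j.
Proof.
move=> nm e; have shift t : spow g (n + t) = spow g (m + t).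
  by elim: t => [|t IH]; rewrite ?addn0 // !addnS /= IH.
elim=> [|q IH] j nj; first by rewrite addn0.
rewrite mulSn addnA IH; last lia.
have -> : j + (m - n) = m + (j - n) by lia.
by rewrite -shift; congr spow; lia.
Qed.

Lemma spow_idem g n m : n < m -> spow g n = spow g m ->
  exists l, op (spow g l) (spow g l) = spow g l.
Proof.
move=> nm e; set d := m - n.
have d_gt0 : 0 < n.+1 * d by rewrite muln_gt0 /d; lia.
exists (n.+1 * d).-1; rewrite spowD.
have -> : ((n.+1 * d).-1 + (n.+1 * d).-1).+1 = (n.+1 * d).-1 + n.+1 * d by lia.
apply: (spow_periodic (ltnW nm) e); have : 1 <= d by rewrite /d; lia.
nia.
Qed.
End Powers.

Section Stability.
Variable M : orbitFiniteMonoid.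
Local Notation "x ** y" := (@Defs.mul M x y) (at level 40, left associativity).
Local Notation "1" := (@mone M).
Local Notation pw := (spow (@Defs.mul M)).

Lemma spow_supported (g : carrier M) : exists S, forall n, supported S (pw g n).
Proof.
have [sm Hsm] := mul_fin_supp M; have [sg Hsg] := act_fin_supp g.
exists (sg ++ sm) => n pi bpi fpi.
have fm : fixes pi sm by move=> a am; apply: fpi; rewrite mem_cat am orbT.
have fg : fixes pi sg by move=> a ag; apply: fpi; rewrite mem_cat ag.
by elim: n => [|n IH] /=; [exact: Hsg|rewrite Hsm // IH Hsg].
Qed.

Lemma idempotent_power (g : carrier M) :
  exists l, pw g l ** pw g l = pw g l.
Proof.
have [S HS] := spow_supported g.
have [n [m [nm e]]] := supported_repeat HS.
exact: (spow_idem (@Defs.mulA M) nm e).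
Qed.

(* b lies in the two-sided ideal generated by a, i.e. b is J-below a *)
Definition jdiv (a b : carrier M) : Prop := exists y z, y ** a ** z = b.

Lemma jdiv_refl a : jdiv a a.
Proof. by exists 1, 1; rewrite Defs.mul1x Defs.mulx1. Qed.

Lemma jdiv_trans a b c : jdiv a b -> jdiv b c -> jdiv a c.
Proof. by move=> [y [z <-]] [y' [z' <-]]; exists (y' ** y), (z ** z'); rewrite !Defs.mulA. Qed.

Lemma jdiv_mull a b : jdiv b (a ** b).
Proof. by exists a, 1; rewrite Defs.mulx1. Qed.

(* Stability: if x is J-below c x then x is already L-below c x.  The proof
   iterates x = (u c) x v and uses an idempotent power e of u c, so that
   x = e x and e ends with the factor u c. *)
Lemma stability (x c u v : carrier M) :
  x = u ** (c ** x) ** v -> exists t, x = t ** (c ** x).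
Proof.
move=> xE; set g := u ** c.
have xgv : x = g ** x ** v by rewrite /g -[u ** c ** x]Defs.mulA.
have pow n : exists w, x = pw g n ** x ** w.
  elim: n => [|n [w IH]]; first by exists v.
  exists (v ** w); rewrite (spowSr (@Defs.mulA M)).
  have -> : pw g n ** g ** x ** (v ** w) = pw g n ** (g ** x ** v) ** w.
    by rewrite !Defs.mulA.
  by rewrite -xgv -IH.
have [l idem] := idempotent_power g.
have [w xlw] := pow l.
have ex : pw g l ** x = x by rewrite {1}xlw !Defs.mulA idem -xlw.
have [w' ew'] : exists w', pw g l = w' ** g.
  case: l {idem xlw ex} => [|l]; first by exists 1; rewrite Defs.mul1x.
  by exists (pw g l); rewrite (spowSr (@Defs.mulA M)).
by exists (w' ** u); rewrite -{1}ex ew' /g !Defs.mulA.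
Qed.
End Stability.

Section Smoothness.
Variable M : orbitFiniteMonoid.
Local Notation "x ** y" := (@Defs.mul M x y) (at level 40, left associativity).
Local Notation "1" := (@mone M).

Lemma mprod_cat (s1 s2 : seq (carrier M)) : mprod (s1 ++ s2) = mprod s1 ** mprod s2.
Proof. by elim: s1 => [|x s1 IH] /=; rewrite ?Defs.mul1x // IH Defs.mulA. Qed.

Lemma mprod_rcons (s : seq (carrier M)) x : mprod (rcons s x) = mprod s ** x.
Proof. by rewrite -cats1 mprod_cat /= Defs.mulx1. Qed.

Lemma smooth_pair (a b : carrier M) :
  smooth [:: a; b] <-> jdiv (a ** b) a /\ jdiv (a ** b) b.
Proof.
rewrite /smooth /= Defs.mulx1; split => [sm|[ja jb] [|[|i]] //].
by split; [exact: (sm 0%N)|exact: (sm 1%N)].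
Qed.

Lemma jdiv_infix (s1 s2 s3 : seq (carrier M)) :
  jdiv (mprod s2) (mprod (s1 ++ s2 ++ s3)).
Proof. by exists (mprod s1), (mprod s3); rewrite !mprod_cat Defs.mulA. Qed.

Lemma smooth_adjacent (xs : seq (carrier M)) i : smooth xs -> i.+1 < size xs ->
  smooth [:: nth 1 xs i; nth 1 xs i.+1].
Proof.
move=> sm ilt; set a := nth 1 xs i; set b := nth 1 xs i.+1.
have xsE : xs = take i xs ++ [:: a; b] ++ drop i.+2 xs.
  by rewrite /= -(drop_nth 1 ilt) -(drop_nth 1 (ltnW ilt)) cat_take_drop.
have jab : jdiv (a ** b) (mprod xs).
  have := jdiv_infix (take i xs) [:: a; b] (drop i.+2 xs).
  by rewrite -xsE /= Defs.mulx1.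
by apply/smooth_pair; split; apply: (jdiv_trans jab); apply: sm; lia.
Qed.

(* Extending a prefix c x, which is J-above its last letter x, by a letter y
   with x, y smooth: by stability x is L-below c x, hence x y is J-below
   c x y, and so c x y is J-above both c x and y. *)
Lemma jdiv_extend (c x y : carrier M) : jdiv (c ** x) x -> smooth [:: x; y] ->
  jdiv (c ** x ** y) (c ** x) /\ jdiv (c ** x ** y) y.
Proof.
move=> [u [v xE]] /smooth_pair [jx jy].
have [t xL] := stability (esym xE).
have jxy : jdiv (c ** x ** y) (x ** y).
  by exists t, 1; rewrite Defs.mulx1 {2}xL !Defs.mulA.
split; last exact: jdiv_trans jxy jy.
exact: jdiv_trans (jdiv_trans jxy jx) (jdiv_mull c x).
Qed.

Lemma prefix_jdiv (xs : seq (carrier M)) :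
  (forall i, i.+1 < size xs -> smooth [:: nth 1 xs i; nth 1 xs i.+1]) ->
  forall k, k < size xs -> forall j, j <= k -> jdiv (mprod (take k.+1 xs)) (nth 1 xs j).
Proof.
move=> pairs; elim=> [|k IH] klt j jk.
  move: jk; rewrite leqn0 => /eqP ->.
  by rewrite (take_nth 1 klt) take0 mprod_rcons /= Defs.mul1x; exact: jdiv_refl.
have klt' : k < size xs by lia.
have pk : mprod (take k.+1 xs) = mprod (take k xs) ** nth 1 xs k.
  by rewrite (take_nth 1 klt') mprod_rcons.
have jlast_k : jdiv (mprod (take k xs) ** nth 1 xs k) (nth 1 xs k).
  by rewrite -pk; exact: IH.
have [jprev jlast] := jdiv_extend jlast_k (pairs k klt).
rewrite (take_nth 1 klt) mprod_rcons pk.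
move: jk; rewrite leq_eqVlt => /predU1P [->|jk]; first exact: jlast.
by apply: (jdiv_trans jprev); rewrite -pk; apply: IH; lia.
Qed.
End Smoothness.

(* A sequence in an orbit-finite monoid is smooth iff all its adjacent pairs
   are smooth. *)
Theorem mainTheorem11 (M : orbitFiniteMonoid) (xs : seq (carrier M)) :
  2 <= size xs ->
  (smooth xs <->
   (forall i, i.+1 < size xs ->
      smooth [:: nth (@mone M) xs i; nth (@mone M) xs i.+1])).
Proof.
move=> _; split => [sm i ilt | pairs j jlt]; first exact: smooth_adjacent.
have last_lt : (size xs).-1 < size xs by lia.
have := prefix_jdiv pairs last_lt (j := j); rewrite prednK ?take_size; last lia.
by apply; lia.
Qed.
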